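(* Let $\mathbb{A}$ be the structure defined in the context, let $t:A^k\to A$ be a polymorphism of $\mathbb{A}$, and let $i\in\{0,\dots,n\}$. Let $l_a,l_i,l_{i+1},\dots,l_n\in\mathbb{N}_0$ satisfy $m\cdot l_a+l_i+l_{i+1}+\dots+l_n=k$. For $j\in\{1,\dots,m\}$ let $\mathbf{w}_j\in A^k$ be the tuple consisting of $m$ consecutive blocks of length $l_a$, where the $j$-th block consists of $a$'s and every other block consists of $i$'s, followed by $l_i$ copies of $i$, then $l_{i+1}$ copies of $i+1$, ..., then $l_n$ copies of $n$. Suppose $t(\mathbf{w}_j)=i$ for all $j\in\{1,\dots,m\}$. Then $$t(\underbrace{a,\dots,a}_{m\cdot l_a},x_1,\dots,x_{l_i},\underbrace{i+1,\dots,i+1}_{l_{i+1}},\dots,\underbrace{n,\dots,n}_{l_n})\neq a$$ for all $x_1,\dots,x_{l_i}\in\{0,1,\dots,i-1\}$. The same holds if one fixed permutation of the $k$ coordinate positions is applied to all the tuples $\mathbf{w}_1,\dots,\mathbf{w}_m$ and to the tuple in the conclusion.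
   Context: Fix integers $n\ge 0$ and $m\ge 2$. Let $A=\{a,0,1,\dots,n\}$. For $i\in\{0,\dots,n+1\}$ let $A_i=\{a,0,1,\dots,i-1\}$, so $A_0=\{a\}$ and $A_{n+1}=A$. For $i\in\{0,\dots,n\}$ let $S_i\subseteq A^{m+1}$ be the relation $$S_i=\Big(A_i\times\{a,i\}^m\setminus\{(a,i,i,\dots,i)\}\Big)\cup\{(j,j,\dots,j)\in A^{m+1}: i<j\le n\}.$$ Let $\mathbb{A}$ be the relational structure with universe $A$ whose relations are $S_0,\dots,S_n$ (each of arity $m+1$) together with every nonempty subset $X\subseteq A$ as a unary relation. A polymorphism of $\mathbb{A}$ is an operation $t:A^k\to A$ compatible with all these relations, where compatibility with a relation $R$ means that applying $t$ coordinatewise to any $k$ tuples of $R$ yields a tuple of $R$. *)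

From mathcomp Require Import all_boot fingroup perm.
Set Implicit Arguments. Unset Strict Implicit. Unset Printing Implicit Defensive.

(* Universe A = {a,0,...,n}: [None] is the element a, [Some j] is j. *)
Definition A (n : nat) : finType := option 'I_n.+1.

Definition is_el n (x : A n) (j : nat) : bool :=
  if x is Some y then nat_of_ord y == j else false.

Definition S (n m i : nat) (x : 'I_m.+1 -> A n) : Prop :=
  ( (x ord0 = None \/ exists y : 'I_n.+1, x ord0 = Some y /\ y < i)
    /\ (forall c : 'I_m.+1, c != ord0 -> x c = None \/ is_el (x c) i)
    /\ ~ (x ord0 = None /\ forall c : 'I_m.+1, c != ord0 -> is_el (x c) i) )
  \/ exists j : 'I_n.+1, i < j /\ forall c : 'I_m.+1, x c = Some j.

Definition polymorphism (n m k : nat) (t : {ffun 'I_k -> A n} -> A n) : Prop :=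
  (forall i : nat, i <= n ->
     forall r : 'I_k -> 'I_m.+1 -> A n,
       (forall j : 'I_k, @S n m i (r j)) ->
       @S n m i (fun c => t [ffun j => r j c]))
  /\ (forall X : {set A n}, X != set0 ->
        forall x : {ffun 'I_k -> A n}, (forall j, x j \in X) -> t x \in X).

Definition tail_seq n (l : 'I_n.+1 -> nat) (p : pred 'I_n.+1) : seq (A n) :=
  flatten [seq nseq (l j) (Some j : A n) | j <- enum 'I_n.+1 & p j].

(* w_j (j : 'I_m, 0-indexed): m blocks of length la, block j of a's, the others of i's,
   then l_i copies of i, ..., l_n copies of n. *)
Definition w_seq n m (i : 'I_n.+1) (la : nat) (l : 'I_n.+1 -> nat) (j : 'I_m)
  : seq (A n) :=
  flatten [seq nseq la (if c == j then None else Some i : A n) | c <- enum 'I_m]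
  ++ tail_seq l (fun j' => i <= j').

Definition c_seq n m (i : 'I_n.+1) (la : nat) (l : 'I_n.+1 -> nat)
  (xs : seq 'I_n.+1) : seq (A n) :=
  nseq (m * la) (None : A n) ++ map (@Some _) xs ++ tail_seq l (fun j' => i < j').

Definition tup n k (s : 'S_k) (w : seq (A n)) : {ffun 'I_k -> A n} :=
  [ffun p : 'I_k => nth None w (s p)].

(** Stack the m+1 tuples (c, w_1, ..., w_m) as the columns of a k-row matrix.
    Every row lies in S_i: in the first m*l_a rows the c-entry is a and the
    w-entries are a's and i's with exactly one a; in the next l_i rows the
    c-entry is some x < i and all w-entries are i; in the remaining rows all
    entries coincide and are either a or some value > i.  Applying t to the
    columns gives (t c, i, ..., i) in S_i, which forces t c <> a since
    (a, i, ..., i) is precisely the tuple excluded from S_i. *)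

From Pilot Require Import Defs.
From mathcomp Require Import all_boot fingroup perm.
Set Implicit Arguments. Unset Strict Implicit. Unset Printing Implicit Defensive.

Section Relation.
Variables (n m : nat) (i : 'I_n.+1).

Definition consf (v0 : A n) (v : 'I_m -> A n) : 'I_m.+1 -> A n :=
  fun c => if unlift ord0 c is Some j then v j else v0.

Lemma consf0 v0 v : consf v0 v ord0 = v0.
Proof. by rewrite /consf unlift_none. Qed.

Lemma consf_lift v0 v j : consf v0 v (lift ord0 j) = v j.
Proof. by rewrite /consf liftK. Qed.

Lemma consf_neq0 v0 v c : c != ord0 -> exists j, consf v0 v c = v j.
Proof. by rewrite eq_sym => /unlift_some [j -> _]; exists j; rewrite consf_lift. Qed.

Lemma S_consf_a (v : 'I_m -> A n) :
  (forall j, v j = None \/ v j = Some i) -> (exists j, v j = None) ->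
  Defs.S i (consf None v).
Proof.
move=> hv [j0 hj0]; left; split; first by left; rewrite consf0.
split.
  by move=> c /(consf_neq0 None v) [j ->]; case: (hv j) => ->; [left | right; rewrite /= eqxx].
by case=> _ /(_ (lift ord0 j0)); rewrite consf_lift hj0 eq_sym neq_lift => /(_ isT).
Qed.

Lemma S_consf_lt (x : 'I_n.+1) (v : 'I_m -> A n) :
  x < i -> (forall j, v j = Some i) -> Defs.S i (consf (Some x) v).
Proof.
move=> hx hv; left; split; first by right; exists x; rewrite consf0.
split; last by rewrite consf0; case.
by move=> c /(consf_neq0 (Some x) v) [j ->]; rewrite hv; right; rewrite /= eqxx.
Qed.

Lemma S_consf_gt (x : 'I_n.+1) (v : 'I_m -> A n) :
  i < x -> (forall j, v j = Some x) -> Defs.S i (consf (Some x) v).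
Proof. by move=> hx hv; right; exists x; split=> // c; rewrite /consf; case: unlift. Qed.

Lemma S_tail_i_head_neq_a (x : 'I_m.+1 -> A n) : 0 < m -> Defs.S i x ->
  (forall j, x (lift ord0 j) = Some i) -> x ord0 <> None.
Proof.
move=> m0 [[_ [_ hnot]] | [y [hiy hy]]] hx hx0.
  by apply: hnot; split=> // c; rewrite eq_sym => /unlift_some [j -> _]; rewrite hx /= eqxx.
by have := hy (lift ord0 (Ordinal m0)); rewrite hx => -[e]; rewrite e ltnn in hiy.
Qed.

End Relation.

Lemma size_flatten_nseq (T U : Type) (g : T -> U) (d : nat) (s : seq T) :
  size (flatten [seq nseq d (g c) | c <- s]) = size s * d.
Proof. by elim: s => //= c s IH; rewrite size_cat size_nseq IH mulSn. Qed.

Lemma nth_flatten_nseq (T U : Type) (g : T -> U) (x0 : U) (d : nat) (s : seq T) q :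
  q < size s * d ->
  nth x0 (flatten [seq nseq d (g c) | c <- s]) q = nth x0 (map g s) (q %/ d).
Proof.
elim: s q => //= c s IH q hq.
have d0 : 0 < d by move: hq; rewrite mulSn; case: (d) => //=; rewrite muln0.
rewrite nth_cat size_nseq; case: ltnP => hqd; first by rewrite nth_nseq hqd divn_small.
have -> : q %/ d = ((q - d) %/ d).+1.
  by rewrite -{1}(subnKC hqd) -{1}(mul1n d) divnMDl // add1n.
by rewrite /= IH // ltn_subLR // -mulSn.
Qed.

Lemma ltn_div_of_ltn_mul q d p : q < p * d -> q %/ d < p.
Proof.
have [-> | d0] := posnP d; first by rewrite muln0.
by rewrite ltn_divLR.
Qed.

Section Tuples.
Variables (n m la : nat) (i : 'I_n.+1) (l : 'I_n.+1 -> nat).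

Lemma tail_seq_ge :
  tail_seq l (fun j => i <= j) = nseq (l i) (Some i) ++ tail_seq l (fun j => i < j).
Proof.
rewrite /tail_seq.
suff -> : [seq j <- enum 'I_n.+1 | i <= (j : 'I_n.+1)] =
             i :: [seq j <- enum 'I_n.+1 | i < (j : 'I_n.+1)] by [].
have lt_trans : transitive (fun x y : 'I_n.+1 => x < y) by move=> ???; apply: ltn_trans.
have sorted_enum : sorted (fun x y : 'I_n.+1 => x < y) (enum 'I_n.+1).
  by have := iota_ltn_sorted 0 n.+1; rewrite -val_enum_ord sorted_map.
apply: (irr_sorted_eq lt_trans); first by move=> ?; rewrite ltnn.
- exact: sorted_filter.
- by rewrite /= path_sortedE // filter_all sorted_filter.
- move=> j; rewrite in_cons mem_filter [in RHS]mem_filter mem_enum andbT.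
  by rewrite leq_eqVlt -val_eqE [val j == _]eq_sym andbT.
Qed.

Lemma nth_tail_seq_gt q :
  nth None (tail_seq l (fun j => i < j)) q = None \/
  exists2 x : 'I_n.+1, nth None (tail_seq l (fun j => i < j)) q = Some x & i < x.
Proof.
case: (ltnP q (size (tail_seq l (fun j => i < j)))) => hq; last by left; rewrite nth_default.
move: (mem_nth None hq); case: (nth None _ q) => [x|_]; last by left.
case/flattenP=> s0 /mapP [j]; rewrite mem_filter => /andP [hij _] -> /nseqP [[->] _].
by right; exists j.
Qed.

Lemma nth_w_seq_block (j : 'I_m) q : q < m * la ->
  nth None (w_seq i la l j) q = if q %/ la == j then None else Some i.
Proof.
move=> hq; have hqm := ltn_div_of_ltn_mul hq.
rewrite /w_seq nth_cat size_flatten_nseq size_enum_ord hq.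
rewrite nth_flatten_nseq ?size_enum_ord // (nth_map j) ?size_enum_ord //.
by rewrite -val_eqE /= nth_enum_ord.
Qed.

Lemma nth_w_seq_tail (j : 'I_m) q : m * la <= q ->
  nth None (w_seq i la l j) q =
  nth None (nseq (l i) (Some i) ++ tail_seq l (fun j => i < j)) (q - m * la).
Proof.
by move=> hq; rewrite /w_seq nth_cat size_flatten_nseq size_enum_ord ltnNge hq tail_seq_ge.
Qed.

Lemma nth_c_seq_block xs q : q < m * la -> nth None (@c_seq n m i la l xs) q = None.
Proof. by move=> hq; rewrite /c_seq (nth_cat _ (nseq _ _)) size_nseq hq nth_nseq hq. Qed.

Lemma nth_c_seq_tail xs q : m * la <= q ->
  nth None (@c_seq n m i la l xs) q =
  nth None (map (@Some _) xs ++ tail_seq l (fun j => i < j)) (q - m * la).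
Proof. by move=> hq; rewrite /c_seq (nth_cat _ (nseq _ _)) size_nseq ltnNge hq. Qed.

Lemma S_row (xs : seq 'I_n.+1) q :
  0 < m -> size xs = l i -> all (fun x : 'I_n.+1 => x < i) xs ->
  Defs.S i (consf (nth None (@c_seq n m i la l xs) q)
                  (fun j : 'I_m => nth None (w_seq i la l j) q)).
Proof.
move=> m0 hxs hall; case: (ltnP q (m * la)) => hq.
  have hqm := ltn_div_of_ltn_mul hq.
  rewrite nth_c_seq_block //; apply: S_consf_a.
  - by move=> j; rewrite nth_w_seq_block //; case: eqP; [left | right].
  - by exists (Ordinal hqm); rewrite nth_w_seq_block // eqxx.
rewrite nth_c_seq_tail //; set q' := q - m * la.
case: (ltnP q' (l i)) => hq'.
  rewrite nth_cat size_map hxs hq' (nth_map i) ?hxs //.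
  apply: S_consf_lt; first by apply: (allP hall); apply: mem_nth; rewrite hxs.
  by move=> j; rewrite nth_w_seq_tail // nth_cat size_nseq hq' nth_nseq hq'.
have ew (j : 'I_m) :
    nth None (w_seq i la l j) q = nth None (tail_seq l (fun j => i < j)) (q' - l i).
  by rewrite nth_w_seq_tail // nth_cat size_nseq ltnNge hq'.
rewrite nth_cat size_map hxs ltnNge hq' /=.
case: (nth_tail_seq_gt (q' - l i)) => [e | [x e hix]]; rewrite e.
  apply: S_consf_a; first by move=> j; left; rewrite ew.
  by exists (Ordinal m0); rewrite ew.
by apply: S_consf_gt => // j; rewrite ew.
Qed.

End Tuples.

Theorem mainTheorem6 (n m k : nat) (hm : 2 <= m)
  (t : {ffun 'I_k -> A n} -> A n) (ht : @polymorphism n m k t)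
  (i : 'I_n.+1) (la : nat) (l : 'I_n.+1 -> nat)
  (hsum : m * la + \sum_(j : 'I_n.+1 | i <= j) l j = k)
  (s : 'S_k)
  (hw : forall j : 'I_m, t (tup s (@w_seq n m i la l j)) = Some i) :
  forall xs : seq 'I_n.+1, size xs = l i -> all (fun x : 'I_n.+1 => x < i) xs ->
    t (tup s (@c_seq n m i la l xs)) <> None.
Proof.
move=> xs hxs hall hc.
have m0 : 0 < m by apply: leq_trans hm.
pose r p := consf (nth None (@c_seq n m i la l xs) (s p))
                  (fun j : 'I_m => nth None (w_seq i la l j) (s p)).
have hS := ht.1 i (ltn_ord i) r (fun p => @S_row n m la i l xs (s p) m0 hxs hall).
have col0 : [ffun p => r p ord0] = tup s (@c_seq n m i la l xs).
  by apply/ffunP => p; rewrite !ffunE /r consf0.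
have col_lift j : [ffun p => r p (lift ord0 j)] = tup s (w_seq i la l j).
  by apply/ffunP => p; rewrite !ffunE /r consf_lift.
apply: (S_tail_i_head_neq_a m0 hS) => [j|]; first by rewrite col_lift hw.
by rewrite col0.
Qed.
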